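(* Let $\pi$ be a projective plane of order $q$ and let $a,b$ be positive integers. The complete bipartite graph $K_{a,b}$ embeds in $\pi$ if and only if either $a,b\le q$, or $\{a,b\}=\{1,q+1\}$ (i.e. the graph is $K_{1,q+1}$).
   Context: $K_{a,b}$ is the complete bipartite graph with classes of sizes $a$ and $b$ (so $K_{a,b}\cong K_{b,a}$). A finite projective plane of order $q$ has $q^2+q+1$ points and lines, $q+1$ points on each line and $q+1$ lines through each point; any two distinct points lie on a unique line and any two lines meet in a unique point. An embedding of a simple graph $G=(V,E)$ into a projective plane is an injective map $\phi$ from $V$ to the points such that the induced map sending an edge $ab$ to the line through $\phi(a),\phi(b)$ is injective on $E$. *)

From mathcomp Require Import all_boot.
Set Implicit Arguments. Unset Strict Implicit. Unset Printing Implicit Defensive.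

Definition proj_plane_order (P L : finType) (inc : P -> L -> bool) (q : nat) : Prop :=
  [/\ #|P| = q ^ 2 + q + 1 /\ #|L| = q ^ 2 + q + 1,
      forall l : L, #|[set p | inc p l]| = q.+1,
      forall p : P, #|[set l | inc p l]| = q.+1,
      forall p1 p2 : P, p1 != p2 -> (exists! l : L, inc p1 l && inc p2 l)
    & forall l1 l2 : L, l1 != l2 -> (exists! p : P, inc p l1 && inc p l2)].

Definition Kab (a b : nat) : rel ('I_a + 'I_b)%type :=
  fun x y => match x, y with
             | inl _, inr _ => true
             | inr _, inl _ => true
             | _, _ => false
             end.

(* Embedding of a simple graph (V, E) (E symmetric irreflexive) into the plane:
   an injective vertex map phi such that the map sending an edge uv to the
   (unique) line through phi u and phi v is injective on edges, i.e. two edges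
   whose endpoints all lie on a common line are the same edge. *)
Definition embeds (V : finType) (E : rel V) (P L : finType) (inc : P -> L -> bool)
  : Prop :=
  exists phi : V -> P, injective phi /\
    forall (u v u' v' : V) (l : L), E u v -> E u' v' ->
      inc (phi u) l -> inc (phi v) l -> inc (phi u') l -> inc (phi v') l ->
      [set u; v] = [set u'; v'].
Arguments Kab : clear implicits.

From mathcomp Require Import all_boot.
Set Implicit Arguments. Unset Strict Implicit. Unset Printing Implicit Defensive.

(* Embedding K_{a,b} amounts to: no line meets one side of the bipartition in
   two points while also containing a point of the other side.  Fixing a right
   vertex y, the lines joining phi y to the a left vertices are then pairwise
   distinct lines through phi y, so a <= q + 1; and if a = q + 1 they exhaust
   the pencil at phi y, so a second right vertex would lie on one of them.
   Conversely, two lines l1, l2 meeting at o give K_{q,q} (left vertices on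
   l1 \ o, right ones on l2 \ o), and a point together with one further point
   on each of its q + 1 lines gives K_{1,q+1}. *)

Definition collinear (P L : finType) (inc : P -> L -> bool) (x y z : P) : bool :=
  [exists l, [&& inc x l, inc y l & inc z l]].

Lemma collinearP (P L : finType) (inc : P -> L -> bool) (x y z : P) :
  reflect (exists l, [/\ inc x l, inc y l & inc z l]) (collinear inc x y z).
Proof.
by apply: (iffP existsP) => -[l hl]; exists l; apply/and3P.
Qed.

Lemma embeds_KabP (P L : finType) (inc : P -> L -> bool) (a b : nat) :
  embeds (Kab a b) inc <->
  exists2 phi : 'I_a + 'I_b -> P, injective phi &
    forall x y z, Kab a b x z -> Kab a b y z ->
      collinear inc (phi x) (phi y) (phi z) -> x = y.
Proof.
split=> [[phi [phi_inj phi_edges]] | [phi phi_inj phi_sep]].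
  exists phi => // x y z xz yz /collinearP[l [hx hy hz]].
  have := set21 x z; rewrite (phi_edges x z y z l) // !inE.
  by case/orP=> /eqP // exz; move: xz; rewrite exz; case: (z).
exists phi; split=> // u v u' v' l.
have sep x y z : Kab a b x z -> Kab a b y z ->
    inc (phi x) l -> inc (phi y) l -> inc (phi z) l -> x = y.
  by move=> xz yz hx hy hz; apply: phi_sep xz yz _; apply/collinearP; exists l.
case: u v u' v' => [i|j] [i'|j'] [k|k'] [m|m'] //= _ _ hu hv hu' hv'.
- by rewrite (sep (inl i) (inl k) (inr j') isT isT hu hu' hv)
             (sep (inr j') (inr m') (inl i) isT isT hv hv' hu).
- by rewrite setUC (sep (inl i) (inl m) (inr j') isT isT hu hv' hv)
                   (sep (inr j') (inr k') (inl i) isT isT hv hu' hu).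
- by rewrite setUC (sep (inr j) (inr m') (inl i') isT isT hu hv' hv)
                   (sep (inl i') (inl k) (inr j) isT isT hv hu' hu).
- by rewrite (sep (inr j) (inr k') (inl i') isT isT hu hu' hv)
             (sep (inl i') (inl m) (inr j) isT isT hv hv' hu).
Qed.

Lemma embeds_inj_hom (V W : finType) (E : rel V) (F : rel W)
    (P L : finType) (inc : P -> L -> bool) (g : W -> V) :
  injective g -> (forall x y, F x y -> E (g x) (g y)) ->
  embeds E inc -> embeds F inc.
Proof.
move=> g_inj g_hom [phi [phi_inj phi_edges]].
exists (phi \o g); split=> [|x y x' y' l xy x'y' hx hy hx' hy'].
  exact: inj_comp.
have preim2 u v : g @^-1: [set g u; g v] = [set u; v].
  by apply/setP=> w; rewrite !inE !(inj_eq g_inj).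
by rewrite -preim2 (phi_edges (g x) (g y) (g x') (g y') l) ?g_hom // preim2.
Qed.

Definition sum_swap (A B : Type) (x : A + B) : B + A :=
  match x with inl i => inr i | inr j => inl j end.

Lemma embeds_KabC (P L : finType) (inc : P -> L -> bool) (a b : nat) :
  embeds (Kab a b) inc -> embeds (Kab b a) inc.
Proof.
apply: (embeds_inj_hom (g := @sum_swap 'I_b 'I_a)).
  by case=> [i|j] [i'|j'] //= [->].
by case=> [i|j] [i'|j'].
Qed.

Lemma exists_inj_in (T : finType) (A : {pred T}) n :
  n <= #|A| -> exists2 f : 'I_n -> T, injective f & forall i, f i \in A.
Proof.
move=> le_n; exists (fun i => enum_val (widen_ord le_n i)).
  by move=> i i' /enum_val_inj [] /val_inj.
by move=> i; apply: enum_valP.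
Qed.

Section ProjectivePlane.

Variables (P L : finType) (inc : P -> L -> bool) (q : nat).
Hypothesis plane : proj_plane_order inc q.

Lemma exists_line x y : x != y -> exists l, inc x l && inc y l.
Proof. by case: plane => _ _ _ line _ /line[l []]; exists l. Qed.

Lemma line_uniq x y l l' : x != y ->
  inc x l -> inc y l -> inc x l' -> inc y l' -> l = l'.
Proof.
case: plane => _ _ _ line _ /line[l0 [_ l0_uniq]] hx hy hx' hy'.
by rewrite -(l0_uniq l) ?hx ?hy // -(l0_uniq l') ?hx' ?hy'.
Qed.

Lemma collinear_across_lines m m' o x y z :
    (forall w, inc w m -> inc w m' -> w = o) ->
  inc x m -> inc y m -> inc z m' -> z != o -> collinear inc x y z -> x = y.
Proof.
move=> mm' xm ym zm' zNo /collinearP[l [xl yl zl]]; apply/eqP; apply: contraNT zNo => xy.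
by rewrite (mm' z) // (line_uniq xy xm ym xl yl).
Qed.

Lemma exists_point_off (l : L) (p : P) : 0 < q -> exists x, inc x l && (x != p).
Proof.
case: plane => _ line_card _ _ _ q_gt0.
have : 1 < #|[set x | inc x l]| by rewrite line_card ltnS.
case/card_gt1P=> x [y [xl yl xy]]; rewrite !inE in xl yl.
have [xp|xNp] := eqVneq x p; last by exists x; rewrite xl.
by exists y; rewrite yl -xp eq_sym.
Qed.

Section Pencil.

Variables (p : P) (S : {set P}).
Hypotheses (pNS : p \notin S) (S_sep : {in S &, forall x y, collinear inc x y p -> x = y}).

Let join x := [pick l | inc p l && inc x l].

Let joinP x : x != p -> exists2 l, join x = Some l & inc p l && inc x l.
Proof.
rewrite eq_sym => /exists_line[l hl].
by rewrite /join; case: pickP => [l' ? | /(_ l)]; [exists l' | rewrite hl].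
Qed.

Let join_inS x : x \in S -> exists2 l, join x = Some l & inc p l && inc x l.
Proof. by move=> xS; apply: joinP; apply: contraNneq pNS => <-. Qed.

Let join_inj : {in S &, injective join}.
Proof.
move=> x y xS yS; have [l -> /andP[pl xl]] := join_inS xS.
have [l' -> /andP[_ yl]] := join_inS yS; case=> ll'.
by apply: S_sep => //; apply/collinearP; exists l; rewrite {2}ll'.
Qed.

Let join_pencil : join @: S \subset Some @: [set l | inc p l].
Proof.
apply/subsetP=> _ /imsetP[x xS ->]; have [l -> /andP[pl _]] := join_inS xS.
by apply: imset_f; rewrite inE.
Qed.

Let card_pencil : #|Some @: [set l | inc p l]| = q.+1.
Proof. by case: plane => _ _ pencil _ _; rewrite card_imset ?pencil //; apply: Some_inj. Qed.

Lemma card_sep_pencil : #|S| <= q.+1.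
Proof. by rewrite -(card_in_imset join_inj) -card_pencil subset_leq_card. Qed.

Lemma sep_pencil_cover : #|S| = q.+1 ->
  forall z, z != p -> exists2 x, x \in S & collinear inc p z x.
Proof.
move=> cardS z zNp; have [l _ /andP[pl zl]] := joinP zNp.
have : Some l \in join @: S.
  have -> : join @: S = Some @: [set l | inc p l].
    by apply/eqP; rewrite eqEcard join_pencil card_pencil (card_in_imset join_inj) cardS ltnSn.
  by apply: imset_f; rewrite inE.
case/imsetP=> x xS; have [l' -> /andP[_ xl]] := join_inS xS; case=> ll'.
rewrite -ll' in xl.
by exists x => //; apply/collinearP; exists l.
Qed.

End Pencil.

Section KabBounds.

Variables (a b : nat) (phi : 'I_a + 'I_b -> P).
Hypotheses (phi_inj : injective phi)
  (phi_sep : forall x y z, Kab a b x z -> Kab a b y z ->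
     collinear inc (phi x) (phi y) (phi z) -> x = y).

Let left_pts := [set phi (inl i) | i : 'I_a].

Let card_left : #|left_pts| = a.
Proof. by rewrite card_imset ?card_ord // => i i' /phi_inj[]. Qed.

Let right_Nleft j : phi (inr j) \notin left_pts.
Proof. by apply/imsetP=> -[i _ /phi_inj]. Qed.

Let left_sep j : {in left_pts &, forall x y, collinear inc x y (phi (inr j)) -> x = y}.
Proof.
by move=> _ _ /imsetP[i _ ->] /imsetP[i' _ ->] /phi_sep ->.
Qed.

Lemma Kab_sep_leq : 0 < b -> a <= q.+1.
Proof.
move=> b_gt0; rewrite -card_left.
apply: (card_sep_pencil (right_Nleft (Ordinal b_gt0))).
exact: left_sep.
Qed.

Lemma Kab_sep_star : a = q.+1 -> b <= 1.
Proof.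
move=> a_eq; rewrite leqNgt; apply/negP => b_gt1.
pose j0 : 'I_b := Ordinal (ltnW b_gt1); pose j1 : 'I_b := Ordinal b_gt1.
have j1Nj0 : phi (inr j1) != phi (inr j0) by rewrite (inj_eq phi_inj).
have [_ /imsetP[i _ ->]] :=
  sep_pencil_cover (right_Nleft j0) (@left_sep j0) (etrans card_left a_eq) j1Nj0.
by move=> /(@phi_sep (inr j0) (inr j1) (inl i) isT isT) [].
Qed.

End KabBounds.

Lemma Kab_embeds_large a b : embeds (Kab a b) inc -> 0 < b -> q < a -> a = q.+1 /\ b = 1.
Proof.
move=> /embeds_KabP[phi phi_inj phi_sep] b_gt0 q_lt_a.
have a_eq : a = q.+1 by apply/eqP; rewrite eqn_leq q_lt_a (Kab_sep_leq phi_inj phi_sep).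
by split=> //; apply/eqP; rewrite eqn_leq b_gt0 (Kab_sep_star phi_inj phi_sep).
Qed.

Lemma Kab_embeds_small a b : 0 < q -> a <= q -> b <= q -> embeds (Kab a b) inc.
Proof.
move=> q_gt0 le_a le_b; case: (plane) => -[_ cardL] line_card _ _ meet_lines.
have [l1 [l2 l12]] : exists l1 l2 : L, l1 != l2.
  have : 1 < #|L| by rewrite cardL addn1 ltnS addn_gt0 q_gt0 orbT.
  by case/card_gt1P=> l1 [l2 [_ _ l12]]; exists l1, l2.
have [o [/andP[o1 o2] o_uniq]] := meet_lines _ _ l12.
have meet x : inc x l1 -> inc x l2 -> x = o by move=> x1 x2; rewrite (o_uniq x) ?x1.
have card_off l : inc o l -> #|[set x | inc x l] :\ o| = q.
  by move=> ol; have := cardsD1 o [set x | inc x l]; rewrite line_card inE ol => -[].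
have [f f_inj f_in] :
    exists2 f : 'I_a -> P, injective f & forall i, f i \in [set x | inc x l1] :\ o.
  by apply: exists_inj_in; rewrite card_off.
have [g g_inj g_in] :
    exists2 g : 'I_b -> P, injective g & forall j, g j \in [set x | inc x l2] :\ o.
  by apply: exists_inj_in; rewrite card_off.
have fNo i : f i != o by have := f_in i; rewrite !inE => /andP[].
have f1 i : inc (f i) l1 by have := f_in i; rewrite !inE => /andP[].
have gNo j : g j != o by have := g_in j; rewrite !inE => /andP[].
have g2 j : inc (g j) l2 by have := g_in j; rewrite !inE => /andP[].
apply/embeds_KabP; exists (fun x => match x with inl i => f i | inr j => g j end).
  case=> [i|j] [i'|j'] => [/f_inj -> // | fg | gf | /g_inj -> //].
    by have := fNo i; rewrite (meet _ (f1 i)) ?eqxx // fg g2.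
  by have := gNo j; rewrite (meet _ _ (g2 j)) ?eqxx // gf f1.
case=> [i|j] [i'|j'] [k|k'] //= _ _ col.
  by rewrite (f_inj _ _ (collinear_across_lines meet (f1 i) (f1 i') (g2 k') (gNo k') col)).
have meet' w : inc w l2 -> inc w l1 -> w = o by move=> w2 w1; apply: meet.
by rewrite (g_inj _ _ (collinear_across_lines meet' (g2 j) (g2 j') (f1 k) (fNo k) col)).
Qed.

Lemma star_embeds : 0 < q -> embeds (Kab 1 q.+1) inc.
Proof.
move=> q_gt0; case: (plane) => -[cardP _] _ pencil_card _ _.
have /card_gt0P[p _] : 0 < #|P| by rewrite cardP addn1.
have [m m_inj m_in] :
    exists2 m : 'I_q.+1 -> L, injective m & forall j, m j \in [set l | inc p l].
  by apply: exists_inj_in; rewrite pencil_card.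
have pm j : inc p (m j) by have := m_in j; rewrite inE.
have off j := exists_point_off (m j) p q_gt0.
pose leaf j := xchoose (off j).
have leaf_m j : inc (leaf j) (m j) by have /andP[] := xchooseP (off j).
have leafNp j : leaf j != p by have /andP[] := xchooseP (off j).
have leaf_sep j j' : collinear inc (leaf j) (leaf j') p -> j = j'.
  case/collinearP=> l [jl j'l pl]; apply: m_inj.
  by rewrite -(line_uniq (leafNp j) jl pl (leaf_m j) (pm j))
             (line_uniq (leafNp j') j'l pl (leaf_m j') (pm j')).
apply/embeds_KabP; exists (fun x => match x with inl _ => p | inr j => leaf j end).
  case=> [i|j] [i'|j'] /= => [_ | pj | jp | e].
  - by rewrite (ord1 i) (ord1 i').
  - by have := leafNp j'; rewrite -pj eqxx.
  - by have := leafNp j; rewrite jp eqxx.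
  - congr inr; apply: leaf_sep; apply/collinearP; exists (m j).
    by rewrite -e; split.
case=> [i|j] [i'|j'] [k|k'] //= _ _.
  by rewrite (ord1 i) (ord1 i').
by move/leaf_sep ->.
Qed.

End ProjectivePlane.

Theorem theorem3p2 (P L : finType) (inc : P -> L -> bool) (q a b : nat) :
  2 <= q -> proj_plane_order inc q -> 0 < a -> 0 < b ->
  (embeds (Kab a b) inc <->
   ((a <= q) && (b <= q)) \/ ((a, b) = (1, q.+1) \/ (a, b) = (q.+1, 1))).
Proof.
move=> q_ge2 plane a_gt0 b_gt0; have q_gt0 : 0 < q by apply: leq_trans q_ge2.
split=> [emb | [/andP[le_a le_b] | [[-> ->] | [-> ->]]]].
- case: (boolP ((a <= q) && (b <= q))); first by left.
  rewrite negb_and -!ltnNge => /orP[q_lt_a | q_lt_b]; right.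
    by have [-> ->] := Kab_embeds_large plane emb b_gt0 q_lt_a; right.
  by have [-> ->] := Kab_embeds_large plane (embeds_KabC emb) a_gt0 q_lt_b; left.
- exact: (Kab_embeds_small plane).
- exact: star_embeds plane q_gt0.
- exact/embeds_KabC/(star_embeds plane q_gt0).
Qed.
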